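(* Let $A$ be a differential ring and $X=\operatorname{Spec}^\Delta A$. For every $\eta\in\mathcal O'(X)$ there exist $b_1,\ldots,b_m\in A$ such that $\iota'(b_i)\eta\in\iota'(A)$ for all $i$ and $\{b_1,\ldots,b_m\}=A$.
   Context: All rings are commutative with unit. A differential ring is a ring with finitely many pairwise commuting derivations. $X=\operatorname{Spec}^\Delta A$ is the set of prime ideals of $A$ closed under all derivations, with the Kolchin topology (closed sets $V(E)=\{\mathfrak p\in X: E\subseteq\mathfrak p\}$, $E\subseteq A$); for $s\in A$, $X_s=\{\mathfrak p\in X: s\notin\mathfrak p\}$. For $E\subseteq A$, $\{E\}$ is the smallest radical differential ideal containing $E$. For $\mathfrak p\in X$, $K(\mathfrak p)$ is the fraction field of $A/\mathfrak p$ with the induced derivations. For an open $U\subseteq X$, $\mathcal O'(U)$ is the set of functions $f$ on $U$ with $f(\mathfrak p)\in K(\mathfrak p)$ that are regular at every point of $U$, where $f$ is regular at $\mathfrak p$ if there exist an open neighborhood $W\subseteq U$ of $\mathfrak p$ and $a,b\in A$ with $b\notin\mathfrak q$ and $f(\mathfrak q)=a/b$ in $K(\mathfrak q)$ for all $\mathfrak q\in W$. With pointwise operations and pointwise derivations, $\mathcal O'(U)$ is a differential ring. The differential homomorphism $\iota'\colon A\to\mathcal O'(X)$ sends $a$ to the function $\mathfrak p\mapsto (a \bmod \mathfrak p)\in K(\mathfrak p)$. *)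

From HB Require Import structures.
From mathcomp Require Import all_boot all_algebra.
Set Implicit Arguments. Unset Strict Implicit. Unset Printing Implicit Defensive.
Import GRing.Theory.
Local Open Scope ring_scope.

Definition is_derivation (A : comPzRingType) (d : A -> A) : Prop :=
  (forall x y, d (x + y) = d x + d y) /\ (forall x y, d (x * y) = d x * y + x * d y).

Definition is_diff_ring (A : comPzRingType) (n : nat) (D : 'I_n -> A -> A) : Prop :=
  (forall i, is_derivation (D i)) /\ (forall i j x, D i (D j x) = D j (D i x)).

Definition is_ideal (A : comPzRingType) (I : A -> Prop) : Prop :=
  I 0 /\ (forall x y, I x -> I y -> I (x + y)) /\ (forall a x, I x -> I (a * x)).

Definition is_radical (A : comPzRingType) (I : A -> Prop) : Prop :=
  forall (x : A) (k : nat), I (x ^+ k) -> I x.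

Definition is_diff_closed (A : comPzRingType) (n : nat) (D : 'I_n -> A -> A)
  (I : A -> Prop) : Prop := forall i x, I x -> I (D i x).

Definition is_prime_ideal (A : comPzRingType) (P : A -> Prop) : Prop :=
  is_ideal P /\ ~ P 1 /\ (forall x y, P (x * y) -> P x \/ P y).

Definition diff_prime (A : comPzRingType) (n : nat) (D : 'I_n -> A -> A)
  (P : A -> Prop) : Prop := is_prime_ideal P /\ is_diff_closed D P.

Definition rad_diff_closure (A : comPzRingType) (n : nat) (D : 'I_n -> A -> A)
  (E : A -> Prop) (x : A) : Prop :=
  forall I : A -> Prop, is_ideal I -> is_radical I -> is_diff_closed D I ->
    (forall y, E y -> I y) -> I x.

(* Elements of K(p) = Frac(A/p) are represented by pairs (a, b) of A with b \notin p,
   standing for (a mod p)/(b mod p); two such pairs are equal in K(p) iff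
   a * d - c * b \in p. *)
Definition frac_eq (A : comPzRingType) (p : A -> Prop) (u v : A * A) : Prop :=
  p (u.1 * v.2 - v.1 * u.2).

(* q lies in the basic Kolchin open set X \ V(E) *)
Definition in_open (A : comPzRingType) (E : A -> Prop) (q : A -> Prop) : Prop :=
  ~ (forall y, E y -> q y).

(* eta : X -> (K(q))_q, given by representatives, is regular at p (U = X) *)
Definition regular_at (A : comPzRingType) (n : nat) (D : 'I_n -> A -> A)
  (eta : (A -> Prop) -> A * A) (p : A -> Prop) : Prop :=
  exists (E : A -> Prop) (a b : A), in_open E p /\
    forall q, diff_prime D q -> in_open E q -> ~ q b /\ frac_eq q (eta q) (a, b).

Definition in_Oprime_X (A : comPzRingType) (n : nat) (D : 'I_n -> A -> A)
  (eta : (A -> Prop) -> A * A) : Prop :=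
  (forall p, diff_prime D p -> ~ p (eta p).2) /\
  (forall p, diff_prime D p -> regular_at D eta p).

From HB Require Import structures.
From mathcomp Require Import all_boot all_algebra.
From mathcomp Require Import boolp classical_sets.
Set Implicit Arguments. Unset Strict Implicit.
Import GRing.Theory.
Local Open Scope classical_set_scope.
Local Open Scope ring_scope.

(* Call s in A a multiplier of eta if s * eta is globally the
   image of an element of A.  The radical differential ideal {M} generated
   by the multipliers is all of A: otherwise, by Zorn's lemma, {M} lies in a
   maximal radical differential ideal not containing 1, which is prime (the
   classical argument via colon ideals (U : a) = {z | a z \in U}); but
   regularity of eta at that prime P provides a representation a/b on an open
   neighbourhood X \ V(E) of P, and for y \in E \ P the element y b is a
   multiplier outside P.  Finally radical differential ideals have finite
   character, so 1 \in {M} already lies in {b_1, ..., b_m} for finitely many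
   multipliers b_i, which is the theorem. *)

(* It follows from the library's Zorn_bigcup applied to {J | P (I `|` J)},
   which is also closed under the union of the empty chain. *)
Lemma zorn_above (T : Type) (P : set (set T)) (I : set T) :
  P I ->
  (forall C, C `<=` P -> total_on C subset -> C !=set0 ->
     P (\bigcup_(J in C) J)) ->
  exists U, [/\ P U, I `<=` U & forall J, P J -> U `<=` J -> J `<=` U].
Proof.
move=> PI Pchain.
have [|M [QM Mmax]] := @Zorn_bigcup T (fun J => P (I `|` J)).
  move=> F FQ Ftot; have [[J0 FJ0]|F0] := pselect (F !=set0); last first.
    suff -> : \bigcup_(J in F) J = set0 by rewrite setU0.
    by apply/seteqP; split=> // x [J FJ _]; apply: F0; exists J.
  set C := [set I `|` J | J in F].
  suff -> : I `|` \bigcup_(J in F) J = \bigcup_(K in C) K.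
    apply: Pchain; first by move=> _ [J FJ <-]; exact: FQ.
    - move=> _ _ [J FJ <-] [K FK <-].
      by have [JK|KJ] := Ftot _ _ FJ FK; [left|right]; apply: setUS.
    - by exists (I `|` J0), J0.
  apply/seteqP; split=> x.
  - case=> [Ix|[J FJ Jx]]; first by exists (I `|` J0); [exists J0|left].
    by exists (I `|` J); [exists J|right].
  - by case=> _ [J FJ <-] [Ix|Jx]; [left|right; exists J].
exists (I `|` M); split.
- exact: QM.
- by move=> x Ix; left.
move=> J PJ MJ; apply: contrapT => JnM.
apply: (Mmax J); last by rewrite setUidr // => x Ix; apply: MJ; left.
by split=> [x Mx|JM]; [apply: MJ; right|apply: JnM => x /JM Mx; right].
Qed.

Section RadicalDifferentialIdeals.
Variables (A : comPzRingType) (n : nat) (D : 'I_n -> A -> A).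

Definition rdi (J : set A) : Prop :=
  [/\ is_ideal J, is_radical J & is_diff_closed D J].

Lemma ideal_mulr (J : set A) x a : is_ideal J -> J x -> J (x * a).
Proof. by move=> [_ [_ Jmul]] Jx; rewrite mulrC; apply: Jmul. Qed.

Lemma ideal_sub (J : set A) x y : is_ideal J -> J x -> J y -> J (x - y).
Proof. by move=> [_ [Jadd Jmul]] Jx Jy; rewrite -mulN1r; apply/Jadd/Jmul. Qed.

Lemma rdc_rdi (E : set A) : rdi (rad_diff_closure D E).
Proof.
split; first split; [|split|..].
- by move=> I [I0 _].
- move=> x y Ex Ey I Iid Irad Idiff EI; have [_ [Iadd _]] := Iid.
  by apply: Iadd; [exact: Ex I Iid Irad Idiff EI|exact: Ey I Iid Irad Idiff EI].
- move=> a x Ex I Iid Irad Idiff EI; have [_ [_ Imul]] := Iid.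
  by apply: Imul; exact: Ex I Iid Irad Idiff EI.
- move=> x k Exk I Iid Irad Idiff EI.
  by apply: (Irad x k); exact: Exk I Iid Irad Idiff EI.
- move=> i x Ex I Iid Irad Idiff EI.
  by apply: (Idiff i); exact: Ex I Iid Irad Idiff EI.
Qed.

Lemma rdc_incl (E : set A) : E `<=` rad_diff_closure D E.
Proof. by move=> y Ey I _ _ _; apply. Qed.

Lemma rdc_min (E J : set A) : rdi J -> E `<=` J -> rad_diff_closure D E `<=` J.
Proof. by move=> [? ? ?] EJ x; apply. Qed.

Lemma rdc_mono (E F : set A) :
  E `<=` F -> rad_diff_closure D E `<=` rad_diff_closure D F.
Proof. by move=> EF; apply: rdc_min; [exact: rdc_rdi|move=> x /EF; apply: rdc_incl]. Qed.

Lemma rdc_one_full (E : set A) x : rad_diff_closure D E 1 -> rad_diff_closure D E x.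
Proof.
have [[_ [_ Emul]] _ _] := rdc_rdi E.
by move=> E1; rewrite -(mulr1 x); apply: Emul.
Qed.

(* Finite character: every element of {E} lies in {F} for a finite F in E,
   since the union of these {F} is a radical differential ideal containing E. *)
Lemma rdc_finite (E : set A) x : rad_diff_closure D E x ->
  exists s : seq A, (forall y, y \in s -> E y) /\
    rad_diff_closure D [set y | y \in s] x.
Proof.
move=> Ex.
pose J z := exists s : seq A, (forall y, y \in s -> E y) /\
    rad_diff_closure D [set y | y \in s] z.
suff [Jrdi EJ] : rdi J /\ E `<=` J by exact: rdc_min Jrdi EJ x Ex.
split; first split; first split; [|split|..].
- by exists [::]; split => //; have [[]] := rdc_rdi [set y | y \in [::]].
- move=> x1 x2 [s1 [s1E x1s]] [s2 [s2E x2s]]; exists (s1 ++ s2); split.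
    by move=> y; rewrite mem_cat => /orP[/s1E|/s2E].
  have [[_ [rdcD _]] _ _] := rdc_rdi [set y | y \in s1 ++ s2].
  apply: rdcD.
  + by apply: rdc_mono x1s => y /= ys; rewrite mem_cat ys.
  + by apply: rdc_mono x2s => y /= ys; rewrite mem_cat ys orbT.
- move=> a z [s [sE zs]]; exists s; split => //.
  by have [[_ [_ rdcM]] _ _] := rdc_rdi [set y | y \in s]; apply: rdcM.
- move=> z k [s [sE zs]]; exists s; split => //.
  by have [_ rdcR _] := rdc_rdi [set y | y \in s]; apply: rdcR zs.
- move=> i z [s [sE zs]]; exists s; split => //.
  by have [_ _ rdcDiff] := rdc_rdi [set y | y \in s]; apply: rdcDiff.
- move=> y Ey; exists [:: y]; split; first by move=> z; rewrite inE => /eqP ->.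
  by apply: rdc_incl; rewrite /= inE.
Qed.

Lemma chain_union_rdi (C : set (set A)) :
  (forall J, C J -> rdi J /\ ~ J 1) -> total_on C subset -> C !=set0 ->
  rdi (\bigcup_(J in C) J) /\ ~ (\bigcup_(J in C) J) 1.
Proof.
move=> CP Ctot [J0 CJ0].
have common x y : (\bigcup_(J in C) J) x -> (\bigcup_(J in C) J) y ->
    exists2 J, C J & J x /\ J y.
  move=> [J CJ Jx] [K CK Ky]; have [JK|KJ] := Ctot _ _ CJ CK.
  - by exists K => //; split => //; apply: JK.
  - by exists J => //; split => //; apply: KJ.
split; last by move=> [J CJ J1]; have [_] := CP J CJ.
split; first split; [|split|..].
- by exists J0 => //; have [[[]]] := CP J0 CJ0.
- move=> x y Ux Uy; have [J CJ [Jx Jy]] := common x y Ux Uy.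
  exists J => //.
  by have [[[_ [Jadd _]] _ _] _] := CP J CJ; apply: Jadd.
- move=> a x [J CJ Jx]; exists J => //.
  by have [[[_ [_ Jmul]] _ _] _] := CP J CJ; apply: Jmul.
- move=> x k [J CJ Jx]; exists J => //.
  by have [[_ Jrad _] _] := CP J CJ; apply: Jrad Jx.
- move=> i x [J CJ Jx]; exists J => //.
  by have [[_ _ Jdiff] _] := CP J CJ; apply: Jdiff.
Qed.

(* The key derivation identity (a d x)^2 = a d x d(a x) - a x d a d x shows:
   if a x lies in a radical ideal stable under d, then so does a d x. *)
Lemma colon_diff_closed (d : A -> A) (U : set A) a x :
  is_derivation d -> is_ideal U -> is_radical U -> (forall y, U y -> U (d y)) ->
  U (a * x) -> U (a * d x).
Proof.
move=> [_ dmul] Uid Urad Ud Uax.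
have square : (a * d x) ^+ 2 = a * d x * d (a * x) - a * x * (d a * d x).
  rewrite dmul mulrDr addrAC [a * d x * _]mulrACA [a * x * _]mulrACA.
  by rewrite [d x * x]mulrC subrr add0r expr2.
apply: (Urad _ 2); rewrite square; apply: ideal_sub => //.
- by have [_ [_ Umul]] := Uid; apply/Umul/Ud.
- exact: ideal_mulr.
Qed.

End RadicalDifferentialIdeals.

Section DifferentialRing.
Variables (A : comPzRingType) (n : nat) (D : 'I_n -> A -> A).
Hypothesis hD : is_diff_ring D.

Lemma colon_rdi (U : set A) a : rdi D U -> rdi D [set z | U (a * z)].
Proof.
move=> [Uid Urad Udiff]; have [U0 [Uadd Umul]] := Uid.
split; first split; [|split|..].
- by rewrite /= mulr0.
- by move=> x y /= Ux Uy; rewrite mulrDr; apply: Uadd.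
- by move=> b x /= Ux; rewrite mulrCA; apply: Umul.
- move=> x k /= Uxk; apply: (Urad _ k.+1).
  by rewrite exprMn exprS exprSr mulrACA mulrC; apply: Umul.
- move=> i x /= Uax; exact: colon_diff_closed (hD.1 i) Uid Urad (Udiff i) Uax.
Qed.

(* If x y \in U then {U, x} {U, y} is contained in U, by two colon steps. *)
Lemma rdc_mul_adjoin (U : set A) x y : rdi D U -> U (x * y) ->
  forall u v, rad_diff_closure D (U `|` [set x]) u ->
    rad_diff_closure D (U `|` [set y]) v -> U (u * v).
Proof.
move=> Urdi Uxy u v Ux Uy; have [Uid _ _] := Urdi.
have yUx : U (y * u).
  apply: (rdc_min (colon_rdi y Urdi) _ Ux) => z [Uz|->] /=.
  - by rewrite mulrC; apply: ideal_mulr.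
  - by rewrite mulrC.
apply: (rdc_min (colon_rdi u Urdi) _ Uy) => z [Uz|->] /=.
- by rewrite mulrC; apply: ideal_mulr.
- by rewrite mulrC.
Qed.

(* A maximal proper radical differential ideal is a differential prime: if
   x, y \notin U, then 1 \in {U, x} and 1 \in {U, y}, so 1 = 1 * 1 \in U. *)
Lemma maximal_rdi_prime (U : set A) : rdi D U -> ~ U 1 ->
  (forall J, rdi D J -> ~ J 1 -> U `<=` J -> J `<=` U) -> diff_prime D U.
Proof.
move=> Urdi U1 Umax; have [Uid _ Udiff] := Urdi.
split; [split; [exact: Uid | split => //] | exact: Udiff].
move=> x y Uxy; apply: contrapT => /not_orP[Ux Uy]; apply: U1.
have adjoin_one c : ~ U c -> rad_diff_closure D (U `|` [set c]) 1.
  move=> Uc; apply: contrapT => J1; apply: Uc.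
  apply: (Umax _ (rdc_rdi D _) J1); first by move=> z Uz; apply: rdc_incl; left.
  by apply: rdc_incl; right.
by rewrite -(mulr1 1); apply: (rdc_mul_adjoin Urdi Uxy); apply: adjoin_one.
Qed.

Lemma diff_prime_above (I : set A) : rdi D I -> ~ I 1 ->
  exists P, diff_prime D P /\ I `<=` P.
Proof.
move=> Irdi I1.
have [U [[Urdi U1] IU Umax]] :=
  zorn_above (P := fun J => rdi D J /\ ~ J 1) (conj Irdi I1) (@chain_union_rdi _ _ D).
by exists U; split => //; apply: maximal_rdi_prime => // J Jrdi J1; apply: Umax.
Qed.

Lemma one_in_rdc_of_avoiding (E : set A) :
  (forall P, diff_prime D P -> exists2 y, E y & ~ P y) -> rad_diff_closure D E 1.
Proof.
move=> avoid; apply: contrapT => E1.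
have [P [Pprime EP]] := diff_prime_above (rdc_rdi D E) E1.
have [y Ey nPy] := avoid P Pprime.
by apply: nPy; apply: EP; apply: rdc_incl.
Qed.

End DifferentialRing.

Lemma in_openP (A : comPzRingType) (E : set A) (p : set A) :
  in_open E p -> exists2 y, E y & ~ p y.
Proof. by move=> /existsNP[y /not_implyP[Ey npy]]; exists y. Qed.

(* s is a multiplier of eta: iota'(s) eta lies in iota'(A), i.e. at every
   point p, s * eta(p) is the class of one fixed element a of A. *)
Definition multiplier (A : comPzRingType) (n : nat) (D : 'I_n -> A -> A)
  (eta : (A -> Prop) -> A * A) (s : A) : Prop :=
  exists a : A, forall p, diff_prime D p ->
    frac_eq p (s * (eta p).1, (eta p).2) (a, 1).

(* Regularity at P produces a multiplier outside P: if eta = a/b on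
   X \ V(E) and y \in E \ P, then y b is a multiplier (with value y a). *)
Lemma multiplier_avoiding (A : comPzRingType) (n : nat) (D : 'I_n -> A -> A)
  (eta : (A -> Prop) -> A * A) (P : set A) :
  diff_prime D P -> regular_at D eta P -> exists2 s, multiplier D eta s & ~ P s.
Proof.
move=> Pprime [E [a [b [EP regE]]]].
have [y Ey nPy] := in_openP EP; have [nPb _] := regE P Pprime EP.
exists (y * b); last by move=> /Pprime.1.2.2[].
exists (y * a) => q qprime; have [[qid _] _] := qprime; rewrite /frac_eq /=.
have -> : y * b * (eta q).1 * 1 - y * a * (eta q).2 =
    y * ((eta q).1 * b - a * (eta q).2).
  by rewrite mulr1 mulrBr -!mulrA [b * _]mulrC.
have [qy|nqy] := pselect (q y); first exact: ideal_mulr.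
have [_ qeta] := regE q qprime (fun Eq => nqy (Eq y Ey)).
by have [_ [_ qmul]] := qid; apply: qmul.
Qed.

Theorem lemma2p5 (A : comPzRingType) (n : nat) (D : 'I_n -> A -> A)
  (hD : is_diff_ring D) (eta : (A -> Prop) -> A * A)
  (heta : in_Oprime_X D eta) :
  exists (m : nat) (b : 'I_m -> A),
    (forall i, exists a : A, forall p, diff_prime D p ->
        frac_eq p (b i * (eta p).1, (eta p).2) (a, 1)) /\
    (forall x : A, rad_diff_closure D (fun y => exists i, y = b i) x).
Proof.
have one : rad_diff_closure D (multiplier D eta) 1.
  apply: (one_in_rdc_of_avoiding hD) => P Pprime.
  exact: multiplier_avoiding Pprime (heta.2 P Pprime).
have [s [sM s1]] := rdc_finite one.
exists (size s), (fun i => s`_i); split=> [i|x]; first by apply/sM/mem_nth.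
apply: rdc_one_full; apply: (rdc_mono _ s1) => y /(nthP 0)[i ilt <-].
by exists (Ordinal ilt).
Qed.
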